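(* Let $c\in(0,1)$ and let $\sigma>0$ satisfy $C_{\mathrm{BS}}(\sigma)=c$. Let $$U_{23}(c)=H\!\left(\min\left(\frac{1+c}{2},\; c+e^k\,\Phi(-\sqrt{2k})\right)\right)\quad\text{and}\quad L_{U23}(c)=d_1^{-1}\!\left(\Phi^{-1}\!\left(\frac{c}{C_{\mathcal D}(U_{23}(c))}\right)\right).$$ Then $L_{U23}(c)\le\sigma$.
   Context: Fix $k\ge 0$. Let $\Phi$ and $\phi$ denote the standard normal distribution function and density. For $\sigma>0$ put $d_1(\sigma)=-k/\sigma+\sigma/2$, $d_2(\sigma)=-k/\sigma-\sigma/2$, and $C_{\mathrm{BS}}(\sigma)=\Phi(d_1(\sigma))-e^k\,\Phi(d_2(\sigma))$, a strictly increasing bijection from $(0,\infty)$ onto $(0,1)$; for $c\in(0,1)$ the implied volatility is the unique $\sigma>0$ with $C_{\mathrm{BS}}(\sigma)=c$. For $c<\mathcal D<1$ define $H(\mathcal D)=\Phi^{-1}(\mathcal D)-\Phi^{-1}\!\left(\frac{\mathcal D-c}{e^k}\right)$. The price-to-delta ratio is $C_{\mathcal D}(y)=C_{\mathrm{BS}}(y)/\Phi(d_1(y))$. The function $d_1^{-1}(x)=x+\sqrt{x^2+2k}$ (which equals $2\max(x,0)$ when $k=0$) is the inverse of $d_1$. *)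

From Stdlib Require Import Reals ClassicalEpsilon.
From Coquelicot Require Import Coquelicot.
Open Scope R_scope.

Definition phi (x : R) : R := exp (- x ^ 2 / 2) / sqrt (2 * PI).

(* standard normal distribution function:
   Phi x = int_{-oo}^x phi = 1/2 + int_0^x phi (phi is even, total mass 1) *)
Definition Phi (x : R) : R := / 2 + RInt phi 0 x.

(* inverse of Phi: for p in (0,1) the unique x with Phi x = p
   (Phi is a strictly increasing bijection R -> (0,1)). *)
Definition Phi_inv (p : R) : R :=
  epsilon (inhabits 0) (fun x => Phi x = p).

Definition d1 (k sigma : R) : R := - k / sigma + sigma / 2.
Definition d2 (k sigma : R) : R := - k / sigma - sigma / 2.

Definition C_BS (k sigma : R) : R :=
  Phi (d1 k sigma) - exp k * Phi (d2 k sigma).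

Definition H (k c D : R) : R := Phi_inv D - Phi_inv ((D - c) / exp k).

Definition C_D (k y : R) : R := C_BS k y / Phi (d1 k y).

(* inverse of d1 *)
Definition d1_inv (k x : R) : R := x + sqrt (x ^ 2 + 2 * k).

Definition U23 (k c : R) : R :=
  H k c (Rmin ((1 + c) / 2) (c + exp k * Phi (- sqrt (2 * k)))).

Definition L_U23 (k c : R) : R :=
  d1_inv k (Phi_inv (c / C_D k (U23 k c))).

(* The proof combines an upper and a lower bound on sigma.
   - Upper bound (implied_vol_le_H): the normalised call price C_BS k s is
     the maximum over y of Phi (y + s) - e^k Phi y (C_BS_max).  Hence any
     decomposition c = Phi x - e^k Phi y forces sigma <= x - y, and for
     c < D < 1 the choice Phi x = D, e^k Phi y = D - c gives sigma <= H(D).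
   - Lower bound (implied_vol_ge_d1_inv): the price-to-delta ratio C_D is
     nondecreasing (C_D_mono), which rests on the monotonicity of
     Phi (- sqrt (x^2 + 2k)) / Phi x, itself a consequence of the Mills-ratio
     inequality u phi(u) <= (1 + u^2)(1 - Phi u).  So sigma <= U implies
     c / C_D U <= Phi (d1 sigma), and inverting Phi and d1 bounds sigma below.
   The corollary applies both with D = min((1+c)/2, c + e^k Phi(-sqrt(2k))). *)
From Pilot Require Import Defs.
From Stdlib Require Import Reals Psatz ClassicalEpsilon.
From Coquelicot Require Import Coquelicot.
From mathcomp Require all_boot all_order all_algebra.
From mathcomp Require all_classical all_reals all_analysis Rstruct Rstruct_topology.
(* Re-import so that d1 and d2 denote the Black-Scholes quantities rather than
   the homonymous Stdlib functions. *)
Import Defs.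
Open Scope R_scope.

Definition gauss (t : R) : R := exp (- t ^ 2).

Lemma gauss_cont (t : R) : continuous gauss t.
Proof. apply (ex_derive_continuous gauss). unfold gauss. auto_derive. easy. Qed.

Lemma gauss_exRInt (a b : R) : ex_RInt gauss a b.
Proof. apply (ex_RInt_continuous gauss). intros; apply gauss_cont. Qed.

Lemma RInt_gauss_derive (y : R) :
  derivable_pt_lim (fun z => RInt gauss 0 z) y (gauss y).
Proof.
apply is_derive_Reals, (is_derive_RInt gauss (fun z => RInt gauss 0 z) 0).
- apply filter_forall. intros b. apply (RInt_correct gauss), gauss_exRInt.
- apply gauss_cont.
Qed.

(* Transfer of the value of the Gaussian integral from MathComp-Analysis,
   where it is computed with Lebesgue integration, to Coquelicot's Riemann
   integral over Stdlib's reals (which MathComp-Analysis knows as a realType).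
   This requires identifying Stdlib's cos and PI with their MathComp
   counterparts, and Stdlib derivatives with MathComp ones. *)
Module GaussIntegral.
Import all_boot all_order all_algebra all_classical all_reals all_analysis.
Import Rstruct Rstruct_topology.
Import Order.TTheory GRing.Theory Num.Theory numFieldNormedType.Exports.
Local Open Scope classical_set_scope.
Local Open Scope ring_scope.

(* Both cosines are sums of the same power series. *)
Lemma RcosE (x : R) : Rtrigo_def.cos x = cos x.
Proof.
rewrite [Rtrigo_def.cos x]/Rtrigo_def.cos; case: exist_cos => y.
rewrite /cos_in /Pser /infinite_sum /= => cos_ub.
have cvg_y : series (cos_coeff' x) @ \oo --> y.
{ apply/cvgrPdist_lt => /= e /RltP /cos_ub[N Nub].
  near=> n.
  have nN : (n.-1 >= N)%coq_nat.
    apply/ssrnat.leP; near: n; exists N.+1 => //= m /= Hm.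
    by rewrite -ltnS prednK // (leq_ltn_trans _ Hm).
  move: Nub => /(_ _ nN) /[!RdistE] /RltP /=.
  rewrite distrC sum_f_R0E.
  have n0 : (0 < n)%N by near: n; exists 1%N.
  rewrite prednK //.
  congr (`| _ - _ | < e).
  apply: eq_bigr=> k _.
  rewrite /cos_coeff' /cos_n RdivE RpowE INRE factE /Rsqr RmultE.
  change (Rmult x x) with (x ^+ 2); rewrite RpowE -exprM.
  have -> : (2 * k)%coq_nat = k.*2 by rewrite -mul2n.
  have -> : ((-1)%coqR : R) = -1 by [].
  by rewrite mulrAC -mul2n.
  Unshelve. all: by end_near. }
by rewrite -(cvg_lim _ cvg_y) // (cvg_lim _ (@cvg_cos_coeff' R x)).
Qed.

(* PI and pi are both characterised as twice the zero of cos in [0, 2]. *)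
Lemma RpiE : PI = pi.
Proof.
have PI2_02 : (0 <= PI / 2 <= 2)%R.
  have [h0 h2] : (0 <= PI / 2 /\ PI / 2 <= 2)%coqR.
    by have := PI2_3_2; have := PI_4; lra.
  by apply/andP; split; apply/RleP.
have cos_PI2 : cos (PI / 2) = 0 by rewrite -RcosE cos_PI2.
have := cos_02_uniq PI2_02 cos_PI2 (pihalf_02_cos_pihalf _).1
  (pihalf_02_cos_pihalf _).2.
by move=> /(f_equal (fun t => t * 2)) /=; rewrite !divfK.
Qed.

Lemma derivable_pt_lim_derive1 (f : R -> R) x l : derivable_pt_lim f x l ->
  derivable (f : R^o -> R^o) x 1 /\ derive1 (f : R^o -> R^o) x = l.
Proof.
move=> df.
have cvg_l : (fun h : R => h^-1 * (f (h + x) - f x)) @ (0:R)^' --> l.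
  apply/(@cvgrPdist_lt _ R^o) => e /RltP e0.
  have [[d d0] Hd] := df e e0.
  near=> h.
  have /eqP hn : h != 0 by near: h; exact: nbhs_dnbhs_neq.
  have hd : `|h| < d by near: h; apply: (@dnbhs0_lt _ R^o); exact/RltP.
  have := Hd h hn (elimT RltP hd).
  rewrite distrC /= RabsE => /RltP; congr (`| _ | < _).
  by rewrite [h + x]addrC mulrC.
split.
  apply/cvg_ex; exists l => /=.
  by apply: cvg_trans cvg_l; apply: near_eq_cvg; near=> h; rewrite [h%:A]mulr1.
by rewrite /derive1; apply: cvg_lim.
Unshelve. all: by end_near.
Qed.

(* Coquelicot's integral of gauss over [0, x] is MathComp-Analysis's one,
   by the fundamental theorem of calculus on both sides. *)
Lemma RInt_gauss_integral0 (x : R) : 0 < x ->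
  RInt gauss 0 x = gauss_integral_proof.integral0_gauss x.
Proof.
move=> x0.
pose F y := RInt gauss 0 y.
have dF y : derivable (F : R^o -> R^o) y 1 /\
            derive1 (F : R^o -> R^o) y = gauss_fun y.
  have -> : gauss_fun y = gauss y by rewrite /gauss RexpE RpowE RoppE.
  exact/derivable_pt_lim_derive1/RInt_gauss_derive.
have cF y : {for y, continuous (F : R^o -> R^o)}.
  by apply: differentiable_continuous; apply/derivable1_diffP; exact: (dF y).1.
have gauss_fun_cont : {within `[0, x], continuous gauss_fun}.
  by apply: continuous_subspaceT; exact: continuous_gauss_fun.
have F_reg : derivable_oo_LRcontinuous (F : R^o -> R^o) 0 x.
  split; first by move=> y _; exact: (dF y).1.
  - exact: cvg_at_right_filter (cF 0).
  - exact: cvg_at_left_filter (cF x).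
rewrite /gauss_integral_proof.integral0_gauss /Rintegral.
rewrite (continuous_FTC2 x0 gauss_fun_cont F_reg); last by move=> y _; exact: (dF y).2.
by rewrite /F /= RInt_point /= subr0.
Qed.

Lemma gauss_sq_limit (eps : R) : (0 < eps)%coqR -> exists M, (0 < M)%coqR /\
  forall x, (M < x)%coqR -> (Rabs (RInt gauss 0 x ^ 2 - PI / 4) < eps)%coqR.
Proof.
move=> /RltP e0.
have := @gauss_integral_proof.cvg_integral0_gauss_sqr R.
move/cvgrPdist_lt => /(_ eps e0) [M [_ HM]].
exists (Num.max M 1); split; first by apply/RltP; rewrite lt_max ltr01 orbT.
move=> x /RltP; rewrite gt_max => /andP [Mx x1].
have := HM x Mx.
rewrite -RInt_gauss_integral0 ?(lt_trans ltr01) // distrC RabsE RpiE => /RltP.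
have -> : (4%coqR : R) = 2 * 2 by rewrite -RmultE.
by rewrite RpowE -natrM.
Qed.

End GaussIntegral.

Lemma exp_le_mono (x y : R) : x <= y -> exp x <= exp y.
Proof. intros [H|<-]; [left; now apply exp_increasing | lra]. Qed.

Lemma sqrt_2PI_pos : 0 < sqrt (2 * PI).
Proof. apply sqrt_lt_R0. generalize PI_RGT_0; lra. Qed.

Lemma phi_pos (x : R) : 0 < phi x.
Proof. apply Rdiv_lt_0_compat; [apply exp_pos | apply sqrt_2PI_pos]. Qed.

Lemma phi_even (x : R) : phi (- x) = phi x.
Proof. unfold phi. now replace ((- x) ^ 2) with (x ^ 2) by ring. Qed.

Lemma phi_shift (x s : R) : phi (x + s) = phi x * exp (- x * s - s ^ 2 / 2).
Proof.
unfold phi, Rdiv.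
rewrite Rmult_assoc, (Rmult_comm (/ _)), <- Rmult_assoc, <- exp_plus.
f_equal. f_equal. field.
Qed.

Lemma phi_le_1 (x : R) : phi x <= 1.
Proof.
assert (exp (- x ^ 2 / 2) <= 1).
{ rewrite <- exp_0. apply exp_le_mono. generalize (pow2_ge_0 x); lra. }
assert (1 <= sqrt (2 * PI)).
{ rewrite <- sqrt_1. apply sqrt_le_1_alt. generalize PI2_3_2; lra. }
assert (0 < exp (- x ^ 2 / 2)) by apply exp_pos.
unfold phi. apply Rle_trans with (exp (- x ^ 2 / 2) / 1); [|lra].
apply Rmult_le_compat_l; [lra|]. apply Rinv_le_contravar; lra.
Qed.

Lemma phi_derive (x : R) : is_derive phi x (- x * phi x).
Proof.
unfold phi. assert (H := sqrt_2PI_pos). auto_derive; [lra|].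
replace (- (x * (x * 1)) * / 2) with (- x ^ 2 / 2) by (unfold Rdiv; ring).
field. lra.
Qed.

Lemma phi_cont (x : R) : continuous phi x.
Proof. apply (ex_derive_continuous phi). eexists. apply phi_derive. Qed.

Lemma phi_exRInt (a b : R) : ex_RInt phi a b.
Proof. apply (ex_RInt_continuous phi). intros; apply phi_cont. Qed.

Lemma Phi_derive (x : R) : is_derive Phi x (phi x).
Proof.
unfold Phi. replace (phi x) with (0 + phi x) by ring.
apply (@is_derive_plus R_AbsRing R_NormedModule).
- apply (@is_derive_const R_AbsRing R_NormedModule).
- apply (is_derive_RInt phi (fun y => RInt phi 0 y) 0).
  + apply filter_forall. intros b. apply (RInt_correct phi), phi_exRInt.
  + apply phi_cont.
Qed.

Lemma ex_derive_Phi (x : R) : ex_derive Phi x.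
Proof. eexists; apply Phi_derive. Qed.

Lemma Derive_Phi (x : R) : Derive Phi x = phi x.
Proof. apply is_derive_unique, Phi_derive. Qed.

Lemma Phi_lt (x y : R) : x < y -> Phi x < Phi y.
Proof.
intros H. apply (incr_function Phi m_infty p_infty phi); try easy.
- intros z _ _. apply Phi_derive.
- intros z _ _. apply phi_pos.
Qed.

Lemma Phi_le (x y : R) : x <= y -> Phi x <= Phi y.
Proof. intros [H|<-]; [left; now apply Phi_lt | lra]. Qed.

Lemma Phi_le_inv (x y : R) : Phi x <= Phi y -> x <= y.
Proof.
intros H. destruct (Rle_lt_dec x y) as [h|h]; auto.
apply Phi_lt in h. lra.
Qed.

Lemma Phi_0 : Phi 0 = / 2.
Proof. unfold Phi. rewrite RInt_point. simpl. unfold zero; simpl. ring. Qed.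

Lemma Phi_sym (x : R) : Phi (- x) = 1 - Phi x.
Proof.
unfold Phi.
assert (E : RInt phi 0 (- x) = - RInt phi 0 x).
{ assert (H := RInt_comp_lin phi (-1) 0 0 x (phi_exRInt _ _)).
  replace (-1 * 0 + 0) with 0 in H by ring.
  replace (-1 * x + 0) with (- x) in H by ring.
  rewrite <- H. change (- RInt phi 0 x) with (opp (RInt phi 0 x)).
  rewrite <- (RInt_opp phi 0 x (phi_exRInt _ _)).
  apply RInt_ext. intros z _. unfold scal, opp; simpl. unfold mult; simpl.
  replace (-1 * z + 0) with (- z) by ring. rewrite phi_even. ring. }
rewrite E. field.
Qed.

Lemma RInt_phi (a b : R) : RInt phi a b = Phi b - Phi a.
Proof.
unfold Phi.
rewrite <- (RInt_Chasles phi 0 a b (phi_exRInt _ _) (phi_exRInt _ _)).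
unfold plus; simpl.
generalize (RInt phi 0 a) (RInt phi a b). intros u v. change R in u, v.
change (@eq R v (/ 2 + (u + v) - (/ 2 + u))). ring.
Qed.

(* The range of Phi: the substitution t = x / sqrt 2 relates Phi to the
   Gaussian integral, whose value sqrt PI / 2 on [0, +oo) gives Phi < 1
   and sup Phi = 1. *)

Lemma Phi_gauss (x : R) : Phi x = / 2 + RInt gauss 0 (x / sqrt 2) / sqrt PI.
Proof.
assert (H2 : 0 < sqrt 2) by (apply sqrt_lt_R0; lra).
assert (HPI : 0 < sqrt PI) by apply sqrt_lt_R0, PI_RGT_0.
assert (Hs : sqrt (2 * PI) = sqrt 2 * sqrt PI).
{ apply sqrt_mult; generalize PI_RGT_0; lra. }
assert (Hsub := RInt_comp_lin gauss (/ sqrt 2) 0 0 x (gauss_exRInt _ _)).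
replace (/ sqrt 2 * 0 + 0) with 0 in Hsub by ring.
replace (/ sqrt 2 * x + 0) with (x / sqrt 2) in Hsub by (unfold Rdiv; ring).
set (g := fun y => scal (/ sqrt 2) (gauss (/ sqrt 2 * y + 0))) in Hsub.
assert (Hg : ex_RInt g 0 x).
{ apply (ex_RInt_continuous g). intros z _. apply (ex_derive_continuous g).
  unfold g, gauss, scal; simpl; unfold mult; simpl. auto_derive. easy. }
unfold Phi. f_equal.
rewrite <- Hsub. unfold Rdiv. rewrite Rmult_comm, <- (RInt_scal g 0 x _ Hg).
apply RInt_ext. intros z _. unfold g, scal; simpl; unfold mult; simpl.
unfold phi, gauss. rewrite Hs.
replace (- (/ sqrt 2 * z + 0) ^ 2) with (- z ^ 2 / 2).
- field. lra.
- replace ((/ sqrt 2 * z + 0) ^ 2) with (z ^ 2 / (sqrt 2 * sqrt 2))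
    by (field; lra).
  rewrite sqrt_sqrt by lra. field.
Qed.

Lemma RInt_gauss_mono (a b : R) : a <= b -> RInt gauss 0 a <= RInt gauss 0 b.
Proof.
intros Hab.
rewrite <- (RInt_Chasles gauss 0 a b (gauss_exRInt _ _) (gauss_exRInt _ _)).
assert (0 <= RInt gauss a b).
{ apply RInt_ge_0; [easy | apply gauss_exRInt | intros; left; apply exp_pos]. }
unfold plus; simpl. lra.
Qed.

Lemma RInt_gauss_le (z : R) : 0 <= z -> RInt gauss 0 z <= sqrt PI / 2.
Proof.
intros Hz. assert (HPI := PI_RGT_0).
assert (Hsq : (sqrt PI / 2) ^ 2 = PI / 4).
{ replace ((sqrt PI / 2) ^ 2) with (sqrt PI * sqrt PI / 4) by field.
  rewrite sqrt_sqrt; lra. }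
assert (0 < sqrt PI) by now apply sqrt_lt_R0.
destruct (Rle_lt_dec (RInt gauss 0 z) (sqrt PI / 2)) as [h|h]; auto.
exfalso.
destruct (GaussIntegral.gauss_sq_limit (RInt gauss 0 z ^ 2 - PI / 4))
  as [M [_ HM]]; [nra|].
assert (Hx := HM (Rmax M z + 1) ltac:(generalize (Rmax_l M z); lra)).
assert (Hmono := RInt_gauss_mono z (Rmax M z + 1)
  ltac:(generalize (Rmax_r M z); lra)).
apply Rabs_def2 in Hx. nra.
Qed.

Lemma RInt_gauss_sup (eps : R) : 0 < eps ->
  exists z, sqrt PI / 2 - eps < RInt gauss 0 z.
Proof.
intros He. assert (HPI := PI_RGT_0).
set (s := sqrt PI / 2).
assert (Hs : 0 < s) by (apply Rdiv_lt_0_compat; [now apply sqrt_lt_R0 | lra]).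
assert (Hsq : s ^ 2 = PI / 4).
{ unfold s. replace ((sqrt PI / 2) ^ 2) with (sqrt PI * sqrt PI / 4) by field.
  rewrite sqrt_sqrt; lra. }
set (e := Rmin eps s).
assert (He1 : e <= eps) by apply Rmin_l.
assert (He2 : e <= s) by apply Rmin_r.
assert (He3 : 0 < e) by (apply Rmin_glb_lt; lra).
destruct (GaussIntegral.gauss_sq_limit (s * e)) as [M [HM0 HM]]; [nra|].
exists (M + 1).
assert (Hx := HM (M + 1) ltac:(lra)). apply Rabs_def2 in Hx.
assert (Hpos := RInt_gauss_mono 0 (M + 1) ltac:(lra)).
rewrite RInt_point in Hpos. unfold zero in Hpos; simpl in Hpos.
assert (Hle := RInt_gauss_le (M + 1) ltac:(lra)). fold s in Hle.
destruct (Rle_lt_dec (RInt gauss 0 (M + 1)) (s - e)) as [h|h]; [|lra].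
assert (RInt gauss 0 (M + 1) ^ 2 <= (s - e) ^ 2) by (apply pow_incr; lra).
nra.
Qed.

Lemma Phi_le_1 (x : R) : Phi x <= 1.
Proof.
destruct (Rle_lt_dec 0 x) as [h|h].
- assert (H2 : 0 < sqrt 2) by (apply sqrt_lt_R0; lra).
  assert (HPI : 0 < sqrt PI) by apply sqrt_lt_R0, PI_RGT_0.
  assert (H := RInt_gauss_le (x / sqrt 2)
    ltac:(apply Rdiv_le_0_compat; lra)).
  rewrite Phi_gauss.
  apply Rle_trans with (/ 2 + (sqrt PI / 2) / sqrt PI).
  + apply Rplus_le_compat_l, Rmult_le_compat_r; [|exact H].
    left; now apply Rinv_0_lt_compat.
  + right; field; lra.
- assert (H := Phi_lt _ _ h). rewrite Phi_0 in H. lra.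
Qed.

Lemma Phi_lt_1 (x : R) : Phi x < 1.
Proof. generalize (Phi_lt x (x + 1) ltac:(lra)) (Phi_le_1 (x + 1)); lra. Qed.

Lemma Phi_pos (x : R) : 0 < Phi x.
Proof. rewrite <- (Ropp_involutive x), Phi_sym. generalize (Phi_lt_1 (- x)); lra. Qed.

Lemma Phi_sup (eps : R) : 0 < eps -> exists x, 1 - eps < Phi x.
Proof.
intros He.
assert (H2 : 0 < sqrt 2) by (apply sqrt_lt_R0; lra).
assert (HPI : 0 < sqrt PI) by apply sqrt_lt_R0, PI_RGT_0.
destruct (RInt_gauss_sup (eps * sqrt PI)) as [z Hz]; [nra|].
exists (z * sqrt 2). rewrite Phi_gauss.
replace (z * sqrt 2 / sqrt 2) with z by (field; lra).
apply Rmult_lt_compat_r with (r := / sqrt PI) in Hz;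
  [|now apply Rinv_0_lt_compat].
replace ((sqrt PI / 2 - eps * sqrt PI) * / sqrt PI) with (/ 2 - eps) in Hz
  by (field; lra).
unfold Rdiv. lra.
Qed.

Lemma Phi_inv_spec (p : R) : 0 < p < 1 -> Phi (Phi_inv p) = p.
Proof.
intros Hp. apply (epsilon_spec (inhabits 0) (fun x => Phi x = p)).
destruct (Phi_sup p ltac:(lra)) as [a Ha]. rewrite <- (Ropp_involutive a), Phi_sym in Ha.
destruct (Phi_sup (1 - p) ltac:(lra)) as [b Hb].
assert (Hab : - a < b).
{ destruct (Rlt_le_dec (- a) b) as [h|h]; auto. apply Phi_le in h. lra. }
destruct (IVT (fun x => Phi x - p) (- a) b) as [z [_ Hz]]; [| exact Hab | lra | lra |].
- intros x. apply continuity_pt_minus; [|apply continuity_pt_const; now intros u v].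
  apply continuity_pt_filterlim, (ex_derive_continuous Phi), ex_derive_Phi.
- exists z. lra.
Qed.

Lemma Phi_inv_le (p z : R) : 0 < p < 1 -> p <= Phi z -> Phi_inv p <= z.
Proof. intros Hp H. apply Phi_le_inv. now rewrite Phi_inv_spec. Qed.

Lemma nondecreasing_of_derive (f df : R -> R) (a b : R) : a <= b ->
  (forall x, is_derive f x (df x)) -> (forall x, a <= x <= b -> 0 <= df x) ->
  f a <= f b.
Proof.
intros Hab Hd Hpos.
destruct (MVT_gen f a b df) as [c [Hc E]].
- intros; apply Hd.
- intros; apply continuity_pt_filterlim, (ex_derive_continuous f).
  eexists; apply Hd.
- rewrite Rmin_left, Rmax_right in Hc by lra.
  assert (0 <= df c * (b - a)) by (apply Rmult_le_pos; [apply Hpos|]; lra).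
  lra.
Qed.

Lemma nonincreasing_of_derive (f df : R -> R) (a b : R) : a <= b ->
  (forall x, is_derive f x (df x)) -> (forall x, a <= x <= b -> df x <= 0) ->
  f b <= f a.
Proof.
intros Hab Hd Hneg.
enough (- f a <= - f b) by lra.
apply (nondecreasing_of_derive (fun x => - f x) (fun x => - df x) a b Hab).
- intros x. apply (@is_derive_opp R_AbsRing R_NormedModule), Hd.
- intros x Hx. generalize (Hneg x Hx); lra.
Qed.

(* Mills-ratio inequality: the Gaussian tail satisfies
   u phi(u) <= (1 + u^2) (1 - Phi(u)) for u > 0.  It follows by integrating
   the identity (- phi t / t)' = phi t (1 + 1/t^2) over [u, b] and letting
   b tend to +oo. *)

Lemma tail_integral_bound (u b : R) : 0 < u < b ->
  phi u / u - phi b / b <= (1 + / u ^ 2) * (Phi b - Phi u).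
Proof.
intros [Hu Hub].
set (g := fun t => phi t * (1 + / t ^ 2)).
assert (Hprim : is_RInt g u b (minus (- phi b / b) (- phi u / u))).
{ apply (is_RInt_derive (fun t => - phi t / t) g); intros t Ht;
    rewrite Rmin_left, Rmax_right in Ht by lra.
  - unfold g, phi. assert (H := sqrt_2PI_pos). auto_derive; [lra|].
    replace (- (t * (t * 1)) * / 2) with (- t ^ 2 / 2) by (unfold Rdiv; ring).
    field. split; lra.
  - apply (ex_derive_continuous g). unfold g, phi. auto_derive.
    apply Rgt_not_eq. nra. }
assert (Hle : RInt g u b <= RInt (fun t => (1 + / u ^ 2) * phi t) u b).
{ apply RInt_le; [lra | eexists; exact Hprim | |].
  - apply (ex_RInt_scal phi u b (1 + / u ^ 2)), phi_exRInt.
  - intros t Ht. unfold g. rewrite (Rmult_comm (1 + / u ^ 2)).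
    apply Rmult_le_compat_l; [left; apply phi_pos|].
    apply Rplus_le_compat_l, Rinv_le_contravar; [apply pow_lt|apply pow_incr]; lra. }
rewrite (RInt_scal phi u b _ (phi_exRInt u b)), RInt_phi in Hle.
rewrite (is_RInt_unique g u b _ Hprim) in Hle.
unfold scal, minus, plus, opp in Hle; simpl in Hle; unfold mult in Hle; simpl in Hle.
change (u * (u * 1)) with (u ^ 2) in Hle. unfold Rdiv in *. lra.
Qed.

Lemma le_of_vanishing_slack (a r u : R) : 0 <= u ->
  (forall b, u < b -> a - / b <= r) -> a <= r.
Proof.
intros Hu Hb. destruct (Rle_lt_dec a r) as [h|h]; auto. exfalso.
set (b := Rmax (u + 1) (2 / (a - r))).
assert (Hb1 : u + 1 <= b) by apply Rmax_l.
assert (Hb2 : 2 / (a - r) <= b) by apply Rmax_r.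
assert (/ b <= (a - r) / 2).
{ replace ((a - r) / 2) with (/ (2 / (a - r))) by (field; lra).
  apply Rinv_le_contravar; [apply Rdiv_lt_0_compat|]; lra. }
generalize (Hb b ltac:(lra)); lra.
Qed.

Lemma mills_ratio_bound (u : R) : 0 < u -> u * phi u <= (1 + u ^ 2) * (1 - Phi u).
Proof.
intros Hu.
assert (Hbound : phi u / u <= (1 + / u ^ 2) * (1 - Phi u)).
{ apply (le_of_vanishing_slack _ _ u); [lra|]. intros b Hb.
  assert (H := tail_integral_bound u b ltac:(lra)).
  assert (phi b / b <= / b).
  { unfold Rdiv. rewrite <- (Rmult_1_l (/ b)) at 2.
    apply Rmult_le_compat_r; [left; apply Rinv_0_lt_compat; lra | apply phi_le_1]. }
  assert (0 < / u ^ 2) by (apply Rinv_0_lt_compat, pow_lt; lra).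
  assert (Phi b - Phi u <= 1 - Phi u) by (generalize (Phi_le_1 b); lra).
  assert ((1 + / u ^ 2) * (Phi b - Phi u) <= (1 + / u ^ 2) * (1 - Phi u))
    by (apply Rmult_le_compat_l; lra).
  lra. }
apply Rmult_le_compat_l with (r := u ^ 2) in Hbound; [|nra].
replace (u ^ 2 * (phi u / u)) with (u * phi u) in Hbound by (field; lra).
replace (u ^ 2 * ((1 + / u ^ 2) * (1 - Phi u))) with ((1 + u ^ 2) * (1 - Phi u))
  in Hbound by (field; lra).
exact Hbound.
Qed.

(* Consequently u (1 - Phi u) / phi u is nondecreasing on [0, +oo):
   its derivative is ((1 + u^2)(1 - Phi u) - u phi u) / phi u. *)
Definition mills_q (u : R) : R := u * (1 - Phi u) / phi u.

Lemma mills_q_mono (t s : R) : 0 <= t <= s -> mills_q t <= mills_q s.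
Proof.
intros [Ht Hts].
apply (nondecreasing_of_derive mills_q
  (fun u => ((1 + u ^ 2) * (1 - Phi u) - u * phi u) / phi u)); auto.
- intros u. unfold mills_q. assert (Hp := phi_pos u). auto_derive.
  + repeat split; [apply ex_derive_Phi | eexists; apply phi_derive | lra].
  + change (fun x => Phi x) with Phi. change (fun x => phi x) with phi.
    rewrite Derive_Phi, (is_derive_unique phi u _ (phi_derive u)).
    field. lra.
- intros u Hu. apply Rdiv_le_0_compat; [|apply phi_pos].
  destruct (Req_dec u 0) as [->|e].
  + rewrite Phi_0. lra.
  + generalize (mills_ratio_bound u ltac:(lra)); lra.
Qed.

(* Writing
   d2 = - sqrt (d1^2 + 2k) as a function of d1, this reduces to the
   monotonicity of the ratio Phi (- sqrt (x^2 + 2k)) / Phi x, whose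
   derivative has the sign of a difference of values of mills_q. *)
Definition d2_of_d1 (k x : R) : R := - sqrt (x ^ 2 + 2 * k).

Lemma sqrt_sq_shift_sq (k x : R) : 0 <= k -> sqrt (x ^ 2 + 2 * k) ^ 2 = x ^ 2 + 2 * k.
Proof. intros Hk. rewrite <- Rsqr_pow2. apply Rsqr_sqrt. nra. Qed.

Lemma tail_ratio_numerator_nonneg (x s : R) : 0 < s -> - x <= s ->
  0 <= phi s * (x / s) * Phi x + Phi (- s) * phi x.
Proof.
intros Hs Hxs.
assert (Hps := phi_pos s). assert (Hpx := phi_pos x).
assert (HPs := Phi_pos (- s)). assert (HPx := Phi_pos x).
destruct (Rle_lt_dec 0 x) as [h|h].
- assert (0 <= x / s) by (apply Rdiv_le_0_compat; lra).
  assert (0 <= phi s * (x / s) * Phi x)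
    by (apply Rmult_le_pos; [apply Rmult_le_pos|]; lra).
  nra.
- set (t := - x).
  assert (Hq := mills_q_mono t s ltac:(unfold t; lra)). unfold mills_q in Hq.
  assert (Hpt := phi_pos t).
  replace x with (- t) by (unfold t; ring).
  rewrite phi_even, !Phi_sym.
  replace (phi s * (- t / s) * (1 - Phi t) + (1 - Phi s) * phi t) with
    (phi t * phi s / s * (s * (1 - Phi s) / phi s - t * (1 - Phi t) / phi t))
    by (field; lra).
  apply Rmult_le_pos; [apply Rdiv_le_0_compat; nra | lra].
Qed.

Definition tail_ratio (k x : R) : R := Phi (d2_of_d1 k x) / Phi x.

Lemma tail_ratio_derive (k x : R) : 0 < k ->
  is_derive (tail_ratio k) x
    (- (phi (sqrt (x ^ 2 + 2 * k)) * (x / sqrt (x ^ 2 + 2 * k)) * Phi x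
        + Phi (- sqrt (x ^ 2 + 2 * k)) * phi x) / Phi x ^ 2).
Proof.
intros Hk. unfold tail_ratio, d2_of_d1.
assert (Hp := Phi_pos x).
assert (Hs : 0 < sqrt (x ^ 2 + 2 * k)) by (apply sqrt_lt_R0; nra).
auto_derive.
- repeat split; try apply ex_derive_Phi; nra.
- change (fun y => Phi y) with Phi. rewrite !Derive_Phi, phi_even.
  replace (x * (x * 1) + 2 * k) with (x ^ 2 + 2 * k) by ring.
  field. lra.
Qed.

Lemma tail_ratio_nonincreasing (k x1 x2 : R) : 0 < k -> x1 <= x2 ->
  tail_ratio k x2 <= tail_ratio k x1.
Proof.
intros Hk H12.
apply (nonincreasing_of_derive _ _ x1 x2 H12 (fun x => tail_ratio_derive k x Hk)).
intros x _.
assert (Hs : 0 < sqrt (x ^ 2 + 2 * k)) by (apply sqrt_lt_R0; nra).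
assert (Hsq := sqrt_sq_shift_sq k x ltac:(lra)).
assert (Hnum := tail_ratio_numerator_nonneg x (sqrt (x ^ 2 + 2 * k)) Hs
  ltac:(nra)).
assert (0 < Phi x ^ 2) by (apply pow_lt, Phi_pos).
assert (0 <= (phi (sqrt (x ^ 2 + 2 * k)) * (x / sqrt (x ^ 2 + 2 * k)) * Phi x
             + Phi (- sqrt (x ^ 2 + 2 * k)) * phi x) / Phi x ^ 2)
  by (apply Rdiv_le_0_compat; lra).
unfold Rdiv in *. lra.
Qed.

(* Cross-multiplied form, valid also for k = 0. *)
Lemma tail_ratio_cross (k x1 x2 : R) : 0 <= k -> x1 <= x2 ->
  Phi (d2_of_d1 k x2) * Phi x1 <= Phi (d2_of_d1 k x1) * Phi x2.
Proof.
intros Hk H12.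
assert (P1 := Phi_pos x1). assert (P2 := Phi_pos x2).
destruct Hk as [Hk|<-].
- assert (H := tail_ratio_nonincreasing k x1 x2 Hk H12). unfold tail_ratio in H.
  apply Rmult_le_compat_r with (r := Phi x1 * Phi x2) in H; [|nra].
  replace (Phi (d2_of_d1 k x2) / Phi x2 * (Phi x1 * Phi x2))
    with (Phi (d2_of_d1 k x2) * Phi x1) in H by (field; lra).
  replace (Phi (d2_of_d1 k x1) / Phi x1 * (Phi x1 * Phi x2))
    with (Phi (d2_of_d1 k x1) * Phi x2) in H by (field; lra).
  exact H.
- unfold d2_of_d1.
  replace (x1 ^ 2 + 2 * 0) with (Rsqr x1) by (unfold Rsqr; ring).
  replace (x2 ^ 2 + 2 * 0) with (Rsqr x2) by (unfold Rsqr; ring).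
  rewrite !sqrt_Rsqr_abs.
  assert (Q1 := Phi_pos (- Rabs x1)). assert (Q2 := Phi_pos (- Rabs x2)).
  destruct (Rle_lt_dec 0 x1) as [h1|h1].
  + rewrite (Rabs_right x1), (Rabs_right x2) by lra.
    assert (Phi (- x2) <= Phi (- x1)) by (apply Phi_le; lra).
    assert (Phi x1 <= Phi x2) by (apply Phi_le; lra).
    apply Rmult_le_compat; try lra; left; apply Phi_pos.
  + rewrite (Rabs_left x1), Ropp_involutive by lra.
    destruct (Rle_lt_dec 0 x2) as [h2|h2].
    * rewrite (Rabs_right x2) by lra.
      assert (Phi (- x2) <= Phi x2) by (apply Phi_le; lra). nra.
    * rewrite (Rabs_left x2), Ropp_involutive by lra. lra.
Qed.

Lemma d1_eq_d2_add (k s : R) : 0 < s -> d1 k s = d2 k s + s.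
Proof. intros; unfold d1, d2; field; lra. Qed.

Lemma d2_eq_d2_of_d1 (k y : R) : 0 <= k -> 0 < y -> d2 k y = d2_of_d1 k (d1 k y).
Proof.
intros Hk Hy. unfold d2_of_d1.
assert (Hneg : d2 k y < 0).
{ unfold d2. assert (0 <= k / y) by (apply Rdiv_le_0_compat; lra). lra. }
replace (d1 k y ^ 2 + 2 * k) with (Rsqr (d2 k y)) by (unfold Rsqr, d1, d2; field; lra).
rewrite sqrt_Rsqr_abs, Rabs_left by exact Hneg. ring.
Qed.

Lemma d1_mono (k a b : R) : 0 <= k -> 0 < a -> a <= b -> d1 k a <= d1 k b.
Proof.
intros Hk Ha Hab. unfold d1.
assert (k / b <= k / a).
{ apply Rmult_le_compat_l; [lra|]. apply Rinv_le_contravar; lra. }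
lra.
Qed.

Lemma d1_inv_d1 (k y : R) : 0 <= k -> 0 < y -> d1_inv k (d1 k y) = y.
Proof.
intros Hk Hy.
assert (E : d1_inv k (d1 k y) = d1 k y - d2_of_d1 k (d1 k y))
  by (unfold d1_inv, d2_of_d1; ring).
rewrite E, <- d2_eq_d2_of_d1 by assumption.
unfold d1, d2. field. lra.
Qed.

Lemma d1_inv_mono (k x x' : R) : 0 <= k -> x <= x' -> d1_inv k x <= d1_inv k x'.
Proof.
intros Hk H. unfold d1_inv.
set (s' := sqrt (x' ^ 2 + 2 * k)).
assert (Hs'0 : 0 <= s') by apply sqrt_pos.
assert (Hs'2 := sqrt_sq_shift_sq k x' Hk). fold s' in Hs'2.
assert (Hs'x : - x' <= s') by nra.
assert (sqrt (x ^ 2 + 2 * k) <= s' + (x' - x)).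
{ rewrite <- (sqrt_pow2 (s' + (x' - x))) by nra.
  apply sqrt_le_1_alt. nra. }
lra.
Qed.

Lemma C_D_mono (k a b : R) : 0 <= k -> 0 < a -> a <= b -> C_D k a <= C_D k b.
Proof.
intros Hk Ha Hab.
assert (Hcross := tail_ratio_cross k (d1 k a) (d1 k b) Hk (d1_mono k a b Hk Ha Hab)).
rewrite <- !d2_eq_d2_of_d1 in Hcross by lra.
assert (HA := Phi_pos (d1 k a)). assert (HB := Phi_pos (d1 k b)).
assert (He := exp_pos k).
unfold C_D, C_BS.
enough (0 <= (Phi (d1 k b) - exp k * Phi (d2 k b)) / Phi (d1 k b)
             - (Phi (d1 k a) - exp k * Phi (d2 k a)) / Phi (d1 k a)) by lra.
replace ((Phi (d1 k b) - exp k * Phi (d2 k b)) / Phi (d1 k b)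
         - (Phi (d1 k a) - exp k * Phi (d2 k a)) / Phi (d1 k a))
  with (exp k * (Phi (d2 k a) * Phi (d1 k b) - Phi (d2 k b) * Phi (d1 k a))
        / (Phi (d1 k a) * Phi (d1 k b))) by (field; lra).
apply Rdiv_le_0_compat; nra.
Qed.

(* The derivative
   phi (y + s) - e^k phi y = phi y (exp (- y s - s^2/2) - e^k) changes sign
   exactly at y = d2 k s. *)
Lemma C_BS_max (k s y : R) : 0 < s -> Phi (y + s) - exp k * Phi y <= C_BS k s.
Proof.
intros Hs. unfold C_BS. rewrite d1_eq_d2_add by exact Hs.
set (m := d2 k s).
set (f := fun y => Phi (y + s) - exp k * Phi y).
set (df := fun y => phi y * (exp (- y * s - s ^ 2 / 2) - exp k)).
assert (Hd : forall x, is_derive f x (df x)).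
{ intros x. unfold f, df. auto_derive.
  - repeat split; apply ex_derive_Phi.
  - change (fun x0 => Phi x0) with Phi. rewrite !Derive_Phi.
    rewrite phi_shift. ring. }
assert (Hexp : forall x, - x * s - s ^ 2 / 2 - k = (m - x) * s).
{ intros x. unfold m, d2. field. lra. }
change (f y <= f m).
destruct (Rle_lt_dec y m) as [h|h].
- apply (nondecreasing_of_derive f df y m h Hd). intros x Hx.
  assert (k <= - x * s - s ^ 2 / 2).
  { enough (0 <= - x * s - s ^ 2 / 2 - k) by lra.
    rewrite (Hexp x). apply Rmult_le_pos; lra. }
  unfold df. apply Rmult_le_pos; [left; apply phi_pos|].
  generalize (exp_le_mono _ _ H); lra.
- apply (nonincreasing_of_derive f df m y ltac:(lra) Hd). intros x Hx.
  assert (- x * s - s ^ 2 / 2 <= k).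
  { enough (- x * s - s ^ 2 / 2 - k <= 0) by lra.
    rewrite (Hexp x). apply Rmult_le_0_r; lra. }
  unfold df. apply Rmult_le_0_l; [left; apply phi_pos|].
  generalize (exp_le_mono _ _ H); lra.
Qed.

(* Any decomposition c = Phi x - e^k Phi y of the call price bounds the
   implied volatility by x - y: otherwise C_BS_max and the strict growth of
   Phi would give c < C_BS k sigma. *)
Lemma implied_vol_le_gap (k c sigma x y : R) :
  0 <= k -> 0 < c -> 0 < sigma -> C_BS k sigma = c ->
  Phi x - exp k * Phi y = c -> sigma <= x - y.
Proof.
intros Hk Hc Hs HC Hxy.
destruct (Rle_lt_dec sigma (x - y)) as [h|h]; auto. exfalso.
assert (He : 1 <= exp k) by (rewrite <- exp_0; apply exp_le_mono; lra).
assert (Hy := Phi_pos y).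
destruct (Rle_lt_dec (x - y) 0) as [h0|h0].
- assert (Phi x <= Phi y) by (apply Phi_le; lra). nra.
- set (s := x - y) in *.
  assert (H1 := C_BS_max k s y h0). replace (y + s) with x in H1 by (unfold s; ring).
  assert (H2 := C_BS_max k sigma (d2 k s) Hs).
  assert (H3 := Phi_lt (d2 k s + s) (d2 k s + sigma) ltac:(lra)).
  unfold C_BS in H1. rewrite d1_eq_d2_add in H1 by exact h0.
  lra.
Qed.

(* Upper bound: sigma <= H(D) for every c < D < 1, since
   H(D) = x - y with Phi x = D and e^k Phi y = D - c. *)
Lemma implied_vol_le_H (k c sigma D : R) :
  0 <= k -> 0 < c -> 0 < sigma -> C_BS k sigma = c -> c < D < 1 ->
  sigma <= H k c D.
Proof.
intros Hk Hc Hs HC HD.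
assert (He : 1 <= exp k) by (rewrite <- exp_0; apply exp_le_mono; lra).
assert (Hq : 0 < (D - c) / exp k < 1).
{ split; [apply Rdiv_lt_0_compat; lra|].
  apply Rmult_lt_reg_r with (r := exp k); [lra|].
  unfold Rdiv. rewrite Rmult_assoc, Rinv_l by lra. lra. }
apply (implied_vol_le_gap k c sigma); auto.
rewrite (Phi_inv_spec D), (Phi_inv_spec ((D - c) / exp k)) by lra.
field. lra.
Qed.

(* Lower bound: for any upper bound U of sigma, the monotonicity of the
   price-to-delta ratio gives c / C_D U <= c / C_D sigma = Phi (d1 sigma),
   and inverting Phi and d1 yields a lower bound for sigma. *)
Lemma implied_vol_ge_d1_inv (k c sigma U : R) :
  0 <= k -> 0 < c -> 0 < sigma -> C_BS k sigma = c -> sigma <= U ->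
  d1_inv k (Phi_inv (c / C_D k U)) <= sigma.
Proof.
intros Hk Hc Hs HC HU.
assert (HA := Phi_pos (d1 k sigma)). assert (HA1 := Phi_lt_1 (d1 k sigma)).
assert (Hsig : C_D k sigma = c / Phi (d1 k sigma)) by (unfold C_D; now rewrite HC).
assert (Hsig0 : 0 < C_D k sigma) by (rewrite Hsig; apply Rdiv_lt_0_compat; lra).
assert (Hmono := C_D_mono k sigma U Hk Hs HU).
assert (Hp : c / C_D k U <= Phi (d1 k sigma)).
{ replace (Phi (d1 k sigma)) with (c / C_D k sigma) by (rewrite Hsig; field; lra).
  apply Rmult_le_compat_l; [lra|]. apply Rinv_le_contravar; lra. }
assert (Hp0 : 0 < c / C_D k U) by (apply Rdiv_lt_0_compat; lra).
rewrite <- (d1_inv_d1 k sigma Hk Hs).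
apply d1_inv_mono, Phi_inv_le; lra.
Qed.

Theorem corollary5p1 (k c sigma : R) :
  0 <= k -> 0 < c < 1 -> 0 < sigma -> C_BS k sigma = c ->
  L_U23 k c <= sigma.
Proof.
intros Hk Hc Hs HC. unfold L_U23, U23.
set (D := Rmin ((1 + c) / 2) (c + exp k * Phi (- sqrt (2 * k)))).
assert (HD : c < D < 1).
{ assert (0 < exp k * Phi (- sqrt (2 * k)))
    by (apply Rmult_lt_0_compat; [apply exp_pos | apply Phi_pos]).
  split; [apply Rmin_glb_lt; lra|].
  apply Rle_lt_trans with ((1 + c) / 2); [apply Rmin_l | lra]. }
apply implied_vol_ge_d1_inv; try tauto.
apply implied_vol_le_H; tauto.
Qed.
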